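(* Let $G=A\oplus T$ be an abelian group where $T$ is the torsion subgroup of $G$ (so $A\cong G/T$ is torsion-free). Then $G$ is strongly co-Hopfian if and only if both $T$ and $A$ are strongly co-Hopfian.
   Context: All groups are abelian. A group $G$ is strongly co-Hopfian if for every endomorphism $f$ of $G$ there is $n\in\mathbb N$ with $f^n(G)=f^{n+1}(G)$. *)

From HB Require Import structures.
From mathcomp Require Import all_boot all_order all_algebra.
Set Implicit Arguments. Unset Strict Implicit. Unset Printing Implicit Defensive.
Import GRing.Theory.
Local Open Scope ring_scope.

Definition in_image (G : zmodType) (g : G -> G) (y : G) : Prop :=
  exists x : G, g x = y.

Definition strongly_coHopfian (G : zmodType) : Prop :=
  forall f : {additive G -> G}, exists n : nat,
    forall y : G, in_image (iter n f) y <-> in_image (iter n.+1 f) y.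

Definition torsion_group (G : zmodType) : Prop :=
  forall x : G, exists n : nat, (0 < n)%N /\ x *+ n = 0.

Definition torsion_free (G : zmodType) : Prop :=
  forall (x : G) (n : nat), (0 < n)%N -> x *+ n = 0 -> x = 0.

From HB Require Import structures.
From mathcomp Require Import all_boot all_order all_algebra.

(* An endomorphism f of A (+) T maps the torsion part T into itself, since A
   is torsion-free, so f is lower triangular with diagonal blocks f11 on A
   and f22 on T. If f11^N and f22^M have stable images, then so does
   f^(M+N): given y = f^(M+N) x, first correct x by an element of A so that
   f11^N kills its A-component; then f^N x lies in T, where the stability
   of f22 applies. Conversely, each of A and T is a retract of A (+) T, and
   stable images pass to retracts. *)

Set Implicit Arguments.
Unset Strict Implicit.
Unset Printing Implicit Defensive.

Import GRing.Theory.
Local Open Scope ring_scope.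

Definition image_stable (U : zmodType) (g : U -> U) (n : nat) : Prop :=
  forall y, in_image (iter n g) y <-> in_image (iter n.+1 g) y.

Lemma in_image_iterS (U : zmodType) (g : U -> U) n y :
  in_image (iter n.+1 g) y -> in_image (iter n g) y.
Proof. by case=> x <-; exists (g x); rewrite iterSr. Qed.

Lemma image_stableP (U : zmodType) (g : U -> U) n :
  (forall y, in_image (iter n g) y -> in_image (iter n.+1 g) y) ->
  image_stable g n.
Proof. by move=> stable_g y; split; [apply: stable_g | apply: in_image_iterS]. Qed.

Lemma image_stable_iterD (U : zmodType) (g : U -> U) n k y :
  image_stable g n -> in_image (iter n g) y -> in_image (iter (k + n) g) y.
Proof.
move=> stable_g; elim: k y => [|k IHk] y // /stable_g [w <-].
have [v vE] := IHk _ (ex_intro _ w erefl).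
by exists v; rewrite addSn !iterS vE.
Qed.

Lemma iter_raddfD (U : zmodType) (f : {additive U -> U}) n :
  {morph iter n f : x y / x + y}.
Proof. by elim: n => [//|n IHn] x y; rewrite !iterS IHn raddfD. Qed.

Lemma iter_raddfB (U : zmodType) (f : {additive U -> U}) n :
  {morph iter n f : x y / x - y}.
Proof. by elim: n => [//|n IHn] x y; rewrite !iterS IHn raddfB. Qed.

Lemma image_stable_retract (G U : zmodType) (F : G -> G) (g : U -> U)
    (i : U -> G) (p : G -> U) n :
  cancel i p -> (forall u, F (i u) = i (g u)) -> (forall x, p (F x) = g (p x)) ->
  image_stable F n -> image_stable g n.
Proof.
move=> iK Fi pF stable_F; have iter_Fi k u : iter k F (i u) = i (iter k g u).
  by elim: k => [//|k IHk]; rewrite !iterS IHk Fi.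
have iter_pF k x : p (iter k F x) = iter k g (p x).
  by elim: k => [//|k IHk]; rewrite !iterS pF IHk.
apply: image_stableP => y [x yE].
have iy_img : in_image (iter n F) (i y) by exists (i x); rewrite iter_Fi yE.
have [w wE] := (stable_F (i y)).1 iy_img.
by exists (p w); rewrite -iter_pF wE iK.
Qed.

Lemma strongly_coHopfian_retract (G U : zmodType)
    (i : {additive U -> G}) (p : {additive G -> U}) :
  cancel i p -> strongly_coHopfian G -> strongly_coHopfian U.
Proof.
move=> iK coHopf_G g.
(* the endomorphism i g p + (1 - i p) of G acts as g on the summand i(U) *)
have [n stable_n] := coHopf_G ((i \o g \o p) \+ (idfun \- (i \o p))).
exists n; apply: image_stable_retract (iK) _ _ stable_n => [u | x] /=.
  by rewrite !iK subrr addr0.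
by rewrite raddfD raddfB /= !iK subrr addr0.
Qed.

Section ProductInjections.
Variables U V : zmodType.

Definition prod_inl (u : U) : U * V := (u, 0).
Definition prod_inr (v : V) : U * V := (0, v).

Fact prod_inl_is_zmod_morphism : zmod_morphism prod_inl.
Proof. by move=> x y; rewrite /prod_inl; congr pair; rewrite /= subrr. Qed.

Fact prod_inr_is_zmod_morphism : zmod_morphism prod_inr.
Proof. by move=> x y; rewrite /prod_inr; congr pair; rewrite /= subrr. Qed.

HB.instance Definition _ :=
  GRing.isZmodMorphism.Build U (U * V)%type prod_inl prod_inl_is_zmod_morphism.
HB.instance Definition _ :=
  GRing.isZmodMorphism.Build V (U * V)%type prod_inr prod_inr_is_zmod_morphism.

Lemma prod_inlK : cancel prod_inl fst. Proof. by []. Qed.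
Lemma prod_inrK : cancel prod_inr snd. Proof. by []. Qed.

Lemma prod_inlDinr (x : U * V) : prod_inl x.1 + prod_inr x.2 = x.
Proof.
by case: x => u v; rewrite /prod_inl /prod_inr; congr pair; rewrite /= ?addr0 ?add0r.
Qed.

Lemma strongly_coHopfian_fst : strongly_coHopfian (U * V)%type -> strongly_coHopfian U.
Proof. exact: strongly_coHopfian_retract prod_inlK. Qed.

Lemma strongly_coHopfian_snd : strongly_coHopfian (U * V)%type -> strongly_coHopfian V.
Proof. exact: strongly_coHopfian_retract prod_inrK. Qed.

End ProductInjections.

Arguments prod_inl {U V}.
Arguments prod_inr {U V}.

Section LowerTriangularEndomorphism.
Variables (U V : zmodType) (f : {additive U * V -> U * V}).
Hypothesis f_inr_fst : forall v, (f (prod_inr v)).1 = 0.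

Let f11 : {additive U -> U} := fst \o f \o prod_inl.
Let f22 : {additive V -> V} := snd \o f \o prod_inr.

Lemma iter_fst k x : (iter k f x).1 = iter k f11 x.1.
Proof.
elim: k x => [//|k IHk] x; rewrite !iterS -IHk.
by rewrite -[in LHS](prod_inlDinr (iter k f x)) raddfD /= f_inr_fst addr0.
Qed.

Lemma iter_inr k v : iter k f (prod_inr v) = prod_inr (iter k f22 v).
Proof.
elim: k => [//|k IHk]; rewrite !iterS IHk.
by rewrite -[LHS]prod_inlDinr f_inr_fst raddf0 add0r.
Qed.

Lemma lower_triangular_image_stable m n :
  image_stable f11 n -> image_stable f22 m -> image_stable f (m + n).
Proof.
move=> stable11 stable22; apply: image_stableP => y [x <-].
have [c cE] := (stable11 (iter n f11 x.1)).1 (ex_intro _ x.1 erefl).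
pose x' := x - f (prod_inl c).
have x'_fst : iter n f11 x'.1 = 0 by rewrite /= iter_raddfB -iterSr cE subrr.
have z_inr : iter n f x' = prod_inr (iter n f x').2.
  by rewrite -[LHS]prod_inlDinr iter_fst x'_fst raddf0 add0r.
have [w wE] := image_stable_iterD n.+1 stable22
  (ex_intro _ (iter n f x').2 erefl).
have x'E : iter (m + n) f x' = iter (m + n).+1 f (prod_inr w).
  by rewrite iterD z_inr !iter_inr -wE addSn addnC.
exists (prod_inr w + prod_inl c).
by rewrite iter_raddfD -x'E iterSr -iter_raddfD subrK.
Qed.

End LowerTriangularEndomorphism.

Lemma strongly_coHopfian_lower_triangular (U V : zmodType) :
  (forall f : {additive U * V -> U * V}, forall v, (f (prod_inr v)).1 = 0) ->
  strongly_coHopfian U -> strongly_coHopfian V -> strongly_coHopfian (U * V)%type.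
Proof.
move=> f_inr_fst coHopf_U coHopf_V f.
have [n stable11] := coHopf_U (fst \o f \o prod_inl).
have [m stable22] := coHopf_V (snd \o f \o prod_inr).
by exists (m + n); apply: lower_triangular_image_stable.
Qed.

Lemma raddf_torsion_eq0 (U V : zmodType) (h : {additive U -> V}) u :
  torsion_group U -> torsion_free V -> h u = 0.
Proof.
move=> torU tfreeV; have [m [m_gt0 uE]] := torU u.
by apply: (tfreeV _ m m_gt0); rewrite -raddfMn uE raddf0.
Qed.

Theorem mainTheorem5 (A T : zmodType) (hT : torsion_group T) (hA : torsion_free A) :
  strongly_coHopfian (A * T)%type <-> (strongly_coHopfian T /\ strongly_coHopfian A).
Proof.
split=> [coHopf_G | [coHopf_T coHopf_A]].
  by split; [apply: strongly_coHopfian_snd coHopf_G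
            | apply: strongly_coHopfian_fst coHopf_G].
apply: strongly_coHopfian_lower_triangular coHopf_A coHopf_T => f t.
exact: (raddf_torsion_eq0 (fst \o f \o prod_inr)).
Qed.
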